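(* Let $P > Q \ge 1$ and $N \ge 1$ be integers. Let $\bm{A} \in \mathbb{R}^{P\times P}$ be orthogonal. For each $i = 1,\dots,N$ let $p_{i,1},\dots,p_{i,Q} > 0$, let $\bm{N}_i$ be a symmetric positive definite $(P-Q)\times(P-Q)$ matrix, and let $$\bm{E}_i = \begin{pmatrix} \operatorname{diag}(p_{i,1},\dots,p_{i,Q}) & 0 \\ 0 & \bm{N}_i\end{pmatrix}, \qquad \bm{C}_i = \bm{A}\bm{E}_i\bm{A}^{\top}.$$ Let $\bm{\alpha} \in \mathbb{R}^Q$ and $y_i = \sum_{j=1}^Q \alpha_j \sqrt{p_{i,j}}$. Let $\overline{\bm{C}} = \arg\min_{\bm{S}\in\mathcal{S}_P^{++}} \sum_{i=1}^N d_W(\bm{C}_i,\bm{S})^2$ be the Wasserstein mean of $\bm{C}_1,\dots,\bm{C}_N$. Let $\overline{\bm{Y}}\in\mathbb{R}^{P\times P}$ satisfy $\overline{\bm{Y}}\,\overline{\bm{Y}}^{\top}=\overline{\bm{C}}$ and, for each $i$, let $\bm{Y}_i \in \mathbb{R}^{P\times P}$ satisfy $\bm{Y}_i\bm{Y}_i^{\top} = \bm{C}_i$. Let $\overline{\bm{Y}}^{\top}\bm{Y}_i = \bm{U}_i\bm{\Sigma}_i\bm{V}_i^{\top}$ be a singular value decomposition, $\bm{Q}_i^* = \bm{V}_i\bm{U}_i^{\top}$, and $$\bm{v}_i = \operatorname{vec}(\bm{Y}_i\bm{Q}_i^* - \overline{\bm{Y}}) \in \mathbb{R}^{P^2}.$$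 Then there exist $\bm{\beta}\in\mathbb{R}^{P^2}$ and $c\in\mathbb{R}$ such that $y_i = \bm{\beta}^{\top}\bm{v}_i + c$ for all $i=1,\dots,N$.
   Context: $\mathcal{S}_P^{++}$ is the set of $P\times P$ real symmetric positive definite matrices. The Wasserstein (Bures) distance is $d_W(\bm{S},\bm{S}') = \big[\operatorname{Tr}(\bm{S}) + \operatorname{Tr}(\bm{S}') - 2\operatorname{Tr}\big((\bm{S}^{1/2}\bm{S}'\bm{S}^{1/2})^{1/2}\big)\big]^{1/2}$, where $\bm{M}^{1/2}$ denotes the symmetric positive semi-definite square root. $\operatorname{vec}(\bm{M})$ is the vector of all coefficients of the matrix $\bm{M}$. The vector $\bm{v}_i$ is the tangent-space vectorization of $\bm{C}_i$ at $\overline{\bm{C}}$ associated with the Wasserstein metric (the quotient of $\mathbb{R}^{P\times P}_*$ with the Frobenius metric by the orthogonal group). *)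

From HB Require Import structures.
From mathcomp Require Import all_boot all_order all_algebra.
From Stdlib Require Import ClassicalEpsilon.
Set Implicit Arguments. Unset Strict Implicit. Unset Printing Implicit Defensive.
Import Order.TTheory GRing.Theory Num.Theory.
Local Open Scope ring_scope.

Section Defs.
Variable R : rcfType.

Definition orthogonal_mx n (A : 'M[R]_n) : Prop := A^T *m A = 1%:M.

Definition symmetric_mx n (M : 'M[R]_n) : Prop := M^T = M.

Definition psd_mx n (M : 'M[R]_n) : Prop :=
  symmetric_mx M /\ forall x : 'cV[R]_n, 0 <= (x^T *m M *m x) 0 0.

Definition spd_mx n (M : 'M[R]_n) : Prop :=
  symmetric_mx M /\ forall x : 'cV[R]_n, x != 0 -> 0 < (x^T *m M *m x) 0 0.

Definition is_psd_sqrt n (M B : 'M[R]_n) : Prop := psd_mx B /\ B *m B = M.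

(* M^{1/2}: the symmetric PSD square root (chosen by Hilbert's epsilon;
   unique whenever M is PSD). *)
Definition sqrtm n (M : 'M[R]_n) : 'M[R]_n :=
  epsilon (inhabits (0 : 'M[R]_n)) (is_psd_sqrt M).

Definition dW n (S S' : 'M[R]_n) : R :=
  Num.sqrt (\tr S + \tr S' - 2 * \tr (sqrtm (sqrtm S *m S' *m sqrtm S))).

End Defs.

From HB Require Import structures.
From mathcomp Require Import all_boot all_order all_algebra.
From mathcomp Require Import complex.
From mathcomp Require Import ring lra.
From Stdlib Require Import ClassicalEpsilon.
Import Order.TTheory GRing.Theory Num.Theory.
Set Implicit Arguments. Unset Strict Implicit. Unset Printing Implicit Defensive.
Local Open Scope ring_scope.

(** The proof rests on the uniqueness of the Wasserstein barycenter.
    1. We build the PSD square root of a symmetric PSD matrix (its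
       eigenvalues are real, so Cayley-Hamilton and Lagrange interpolation
       give it as a polynomial in the matrix) and prove it is unique.
    2. For the Bures fidelity F(C, S) = tr sqrt(C^1/2 S C^1/2) we prove
       2 F(C, S) <= tr C + tr S and the strict midpoint concavity of
       S |-> F(C, S); hence the objective S |-> sum_i dW(C_i, S)^2 is
       strictly midpoint-convex and any symmetric orthogonal O fixing all
       the C_i also fixes their barycenter Cbar.
    3. The reflections of the j-th coordinate, conjugated by A, fix every
       C_i, so a_j = A e_j is a common eigenvector of the C_i (eigenvalue
       p_{i,j}) and of Cbar (eigenvalue d_j > 0).
    4. For such a common eigenvector a, the optimal transport coordinate
       a^T Y_i Q_i Ybar^T a (Q_i = V_i U_i^T) equals sqrt(d_j) sqrt(p_{i,j}); since it is
       a linear function of vec(Y_i Q_i - Ybar) up to a constant, the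
       theorem follows by taking the combination with weights
       alpha_j / sqrt(d_j). *)

Section PositiveMatrices.
Variable R : rcfType.

Lemma tr_gram_sum m n (M : 'M[R]_(m, n)) :
  \tr (M^T *m M) = \sum_j \sum_i M i j ^+ 2.
Proof.
rewrite /mxtrace; apply: eq_bigr => j _; rewrite !mxE; apply: eq_bigr => i _.
by rewrite !mxE expr2.
Qed.

Lemma tr_gram_ge0 m n (M : 'M[R]_(m, n)) : 0 <= \tr (M^T *m M).
Proof.
by rewrite tr_gram_sum; apply: sumr_ge0 => j _; apply: sumr_ge0 => i _; exact: sqr_ge0.
Qed.

Lemma tr_gram_eq0 m n (M : 'M[R]_(m, n)) : \tr (M^T *m M) = 0 -> M = 0.
Proof.
have sq0 k : 0 <= \sum_i M i k ^+ 2 by apply: sumr_ge0 => i _; exact: sqr_ge0.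
rewrite tr_gram_sum => /eqP; rewrite psumr_eq0 // => /allP col0.
apply/matrixP => i j; rewrite mxE; move: (col0 j (mem_index_enum j)).
rewrite psumr_eq0 => [/allP /(_ i (mem_index_enum i))|k _]; last exact: sqr_ge0.
by rewrite sqrf_eq0 => /eqP.
Qed.

Lemma psd_tr_congr n m (B : 'M[R]_n) (X : 'M[R]_(n, m)) :
  psd_mx B -> 0 <= \tr (X^T *m B *m X).
Proof.
move=> [_ hB]; apply: sumr_ge0 => k _.
have -> : (X^T *m B *m X) k k = ((col k X)^T *m B *m col k X) 0 0.
  rewrite !mxE; apply: eq_bigr => j _; rewrite !mxE; congr (_ * _).
  by apply: eq_bigr => i _; rewrite !mxE.
exact: hB.
Qed.

Lemma spd_psd n (S : 'M[R]_n) : spd_mx S -> psd_mx S.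
Proof.
move=> [sS hS]; split => // x.
by case: (eqVneq x 0) => [->|x0]; [rewrite mulmx0 mxE | exact/ltW/hS].
Qed.

Lemma spd_unit n (S : 'M[R]_n) : spd_mx S -> S \in unitmx.
Proof.
move=> [_ hS]; rewrite unitmxE unitfE; apply/negP => /det0P [v v0 hv].
have := hS v^T; rewrite trmx_eq0 v0 => /(_ isT).
by rewrite trmxK hv mul0mx mxE ltxx.
Qed.

Lemma psd_sqr n (B : 'M[R]_n) : B^T = B -> psd_mx (B *m B).
Proof.
move=> sB; split; first by rewrite /symmetric_mx trmx_mul sB.
move=> x; have := tr_gram_ge0 (B *m x).
by rewrite trace_mx11 trmx_mul sB !mulmxA.
Qed.

Lemma psd_congr n (K S : 'M[R]_n) : psd_mx S -> psd_mx (K *m S *m K^T).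
Proof.
move=> [sS hS]; split; first by rewrite /symmetric_mx !trmx_mul trmxK sS mulmxA.
by move=> x; have := hS (K^T *m x); rewrite trmx_mul trmxK !mulmxA.
Qed.

Lemma spd_congr n (K S : 'M[R]_n) : K \in unitmx -> spd_mx S -> spd_mx (K *m S *m K^T).
Proof.
move=> uK [sS hS]; split; first by rewrite /symmetric_mx !trmx_mul trmxK sS mulmxA.
move=> x x0; have := hS (K^T *m x); rewrite trmx_mul trmxK !mulmxA; apply.
have uKT : K^T \in unitmx by rewrite unitmx_tr.
by apply: contra x0 => /eqP h; apply/eqP; rewrite -(mulKmx uKT x) h mulmx0.
Qed.

Lemma psd_congr_sym n (K S : 'M[R]_n) : K^T = K -> psd_mx S -> psd_mx (K *m S *m K).
Proof. by move=> sK /(psd_congr K); rewrite sK. Qed.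

Lemma spd_congr_sym n (K S : 'M[R]_n) :
  K^T = K -> K \in unitmx -> spd_mx S -> spd_mx (K *m S *m K).
Proof. by move=> sK uK /(spd_congr uK); rewrite sK. Qed.

Lemma psd_scale n c (B : 'M[R]_n) : 0 <= c -> psd_mx B -> psd_mx (c *: B).
Proof.
move=> c0 [sB hB]; split; first by rewrite /symmetric_mx linearZ /= sB.
by move=> x; rewrite -scalemxAr -scalemxAl mxE; apply: mulr_ge0.
Qed.

Lemma spd_midpoint n (S1 S2 : 'M[R]_n) :
  spd_mx S1 -> spd_mx S2 -> spd_mx ((2:R)^-1 *: (S1 + S2)).
Proof.
move=> [s1 h1] [s2 h2]; split; first by rewrite /symmetric_mx linearZ /= raddfD /= s1 s2.
move=> x x0; rewrite -scalemxAr -scalemxAl mxE mulmxDr mulmxDl mxE.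
by apply: mulr_gt0; [rewrite invr_gt0 | apply: addr_gt0; [apply: h1|apply: h2]].
Qed.

Lemma diag_psd n (D : 'M[R]_n) : is_diag_mx D -> (forall k, 0 <= D k k) -> psd_mx D.
Proof.
move=> /is_diag_mxP dD pD.
have -> : D = diag_mx (\row_k D k k).
  apply/matrixP => i j; rewrite !mxE; case: eqVneq => [->|ij]; first by rewrite mulr1n.
  by rewrite mulr0n dD.
split; first by rewrite /symmetric_mx tr_diag_mx.
move=> x; rewrite mul_mx_diag mxE; apply: sumr_ge0 => k _; rewrite !mxE.
by rewrite mulrAC; apply: mulr_ge0 => //; rewrite -expr2; exact: sqr_ge0.
Qed.

End PositiveMatrices.

Section SymmetricSpectrum.
Variable R : rcfType.

Lemma sym_eigenvalue_real n (A : 'M[R]_n) (z : R[i]) : A^T = A ->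
  root (char_poly (map_mx (real_complex R) A)) z -> z \is Num.real.
Proof.
move=> sA; rewrite -eigenvalue_root_char => /eigenvalueP [v hv v0].
set Ac := map_mx _ A in hv.
set w := map_mx Num.conj v.
have AcT : Ac^T = Ac by rewrite /Ac map_trmx sA.
have Acc : map_mx Num.conj Ac = Ac.
  apply/matrixP=> i j; rewrite !mxE; apply/CrealP; apply/complex_realP.
  by exists (A i j).
have wwT : map_mx Num.conj w^T = v^T.
  by apply/matrixP=> i j; rewrite !mxE conjCK.
(* both v A w^T and v w^T are self-conjugate, and the first is z times the second *)
set q := (v *m Ac *m w^T) 0 0.
set nn := (v *m w^T) 0 0.
have hq : q = z * nn by rewrite /q hv -scalemxAl mxE.
have qc : q^* = q.
  have -> : q^* = (map_mx Num.conj (v *m Ac *m w^T)) 0 0 by rewrite mxE.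
  rewrite !map_mxM Acc wwT.
  transitivity ((w *m Ac *m v^T)^T 0 0); first by rewrite [RHS]mxE.
  by rewrite !trmx_mul trmxK AcT mulmxA.
have nc : nn^* = nn.
  have -> : nn^* = (map_mx Num.conj (v *m w^T)) 0 0 by rewrite mxE.
  rewrite map_mxM wwT.
  transitivity ((w *m v^T)^T 0 0); first by rewrite [RHS]mxE.
  by rewrite !trmx_mul trmxK.
have nn0 : nn != 0.
  have -> : nn = \sum_k `|v 0 k| ^+ 2.
    by rewrite /nn mxE; apply: eq_bigr => k _; rewrite !mxE normCK.
  apply: contra v0; rewrite psumr_eq0 => [/allP H|]; last by move=> *; exact: exprn_ge0.
  apply/eqP/matrixP => i k; rewrite (ord1 i) mxE.
  by move: (H k (mem_index_enum k)) => /implyP /(_ isT); rewrite sqrf_eq0 normr_eq0 => /eqP.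
apply/CrealP.
have : (z * nn)^* = z * nn by rewrite -hq qc.
by rewrite rmorphM /= nc => /(mulIf nn0).
Qed.

Lemma sym_char_poly_split n (A : 'M[R]_n) : A^T = A ->
  exists s : seq R, char_poly A = \prod_(r <- s) ('X - r%:P).
Proof.
move=> sA.
have [rs hrs] := closed_field_poly_normal (map_poly (real_complex R) (char_poly A)).
rewrite lead_coef_map (monicP (char_poly_monic A)) rmorph1 scale1r in hrs.
exists (map (@complex.Re R) rs).
apply: (@map_poly_inj _ _ (real_complex R)).
rewrite hrs rmorph_prod big_map; apply: eq_big_seq => z zin.
rewrite /= map_polyXsubC; congr (_ - _%:P); symmetry; apply: RRe_real.
apply: (sym_eigenvalue_real sA).
by rewrite -map_char_poly hrs root_prod_XsubC.
Qed.

End SymmetricSpectrum.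

Section SquareRoot.
Variable R : rcfType.

(** For S symmetric, S^2 X = 0 implies S X = 0 (compare Gram traces). *)
Lemma sym_sqr_mul0 n m (S : 'M[R]_n) (X : 'M[R]_(n, m)) :
  S^T = S -> S *m S *m X = 0 -> S *m X = 0.
Proof.
move=> sS h; apply: tr_gram_eq0; rewrite trmx_mul sS.
have -> : X^T *m S *m (S *m X) = X^T *m (S *m S *m X) by rewrite !mulmxA.
by rewrite h mulmx0 mxtrace0.
Qed.

Lemma psd_shift_mul0 n m (A : 'M[R]_n) (X : 'M[R]_(n, m)) r :
  psd_mx A -> r < 0 -> (A - r%:M) *m X = 0 -> X = 0.
Proof.
move=> hA hr h; apply: tr_gram_eq0.
have : \tr (X^T *m ((A - r%:M) *m X)) = 0 by rewrite h mulmx0 mxtrace0.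
rewrite mulmxBl mulmxBr raddfB /= mul_scalar_mx -scalemxAr mxtraceZ mulmxA => e.
have h1 := psd_tr_congr X hA; have h2 := tr_gram_ge0 X.
have h3 : 0 <= - r * \tr (X^T *m X) by apply: mulr_ge0 => //; rewrite oppr_ge0 ltW.
by apply/eqP; rewrite eq_le h2 andbT; nra.
Qed.

Definition prod_XsubC (s : seq R) : {poly R} := \prod_(r <- s) ('X - r%:P).

Fixpoint nonneg_roots (s : seq R) : seq R :=
  if s is r :: s' then
    if (0 <= r) && (r \notin nonneg_roots s') then r :: nonneg_roots s'
    else nonneg_roots s'
  else [::].

Lemma nonneg_roots_uniq s : uniq (nonneg_roots s).
Proof. by elim: s => //= r s IH; case: ifP => //= /andP [_ ->]. Qed.

Lemma nonneg_roots_ge0 s : all (fun r => 0 <= r) (nonneg_roots s).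
Proof. by elim: s => //= r s IH; case: ifP => //= /andP [-> _]. Qed.

Lemma horner_mx_XsubC n (A : 'M[R]_n.+1) r : horner_mx A ('X - r%:P) = A - r%:M.
Proof. by rewrite rmorphB /= horner_mx_X horner_mx_C. Qed.

(** If a PSD matrix A is annihilated by prod (X - r) * q, it is still
    annihilated after discarding the negative and the repeated roots r:
    a PSD matrix is semisimple with nonnegative spectrum. *)
Lemma nonneg_roots_annihilate n (A : 'M[R]_n.+1) : psd_mx A -> forall s q,
  horner_mx A (prod_XsubC s * q) = 0 ->
  horner_mx A (prod_XsubC (nonneg_roots s) * q) = 0.
Proof.
move=> hA; elim => [|r s IH] q //= H.
have H' : horner_mx A (prod_XsubC (nonneg_roots s) * (('X - r%:P) * q)) = 0.
  by apply: IH; move: H; rewrite /prod_XsubC big_cons mulrCA mulrA.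
case: ifP => [_|hr]; first by rewrite /prod_XsubC big_cons -mulrA mulrCA.
have [r0|rneg] := boolP (0 <= r); last first.
  move: H'; rewrite mulrCA rmorphM /= horner_mx_XsubC => H2.
  by apply: (psd_shift_mul0 hA _ H2); rewrite ltNge.
move: hr; rewrite r0 /= => /negbFE rin.
move: H'; rewrite /prod_XsubC (big_rem _ rin) /=.
set P := \prod_(_ <- _) _.
have -> : ('X - r%:P) * P * (('X - r%:P) * q) = ('X - r%:P) * ('X - r%:P) * (P * q).
  by ring.
rewrite -!mulrA !rmorphM /= !horner_mx_XsubC => H2.
apply: sym_sqr_mul0; last by rewrite -mulmxA.
by case: hA => sA _; rewrite raddfB /= tr_scalar_mx sA.
Qed.

Lemma horner_mx_sym n (A : 'M[R]_n.+1) p : A^T = A -> (horner_mx A p)^T = horner_mx A p.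
Proof.
move=> sA; elim/poly_ind: p => [|p c IH]; first by rewrite rmorph0 trmx0.
rewrite rmorphD rmorphM /= horner_mx_X horner_mx_C raddfD /= tr_scalar_mx.
congr (_ + _).
have -> : (horner_mx A p * A)^T = A^T *m (horner_mx A p)^T by exact: trmx_mul.
rewrite IH sA.
have e : horner_mx A (p * 'X) = horner_mx A ('X * p) by rewrite mulrC.
by rewrite !rmorphM /= horner_mx_X in e; rewrite e.
Qed.

Lemma sym_idem_psd n (P : 'M[R]_n) (x : 'cV[R]_n) :
  P^T = P -> P *m P = P -> 0 <= (x^T *m P *m x) 0 0.
Proof.
move=> sP iP.
have -> : x^T *m P *m x = (P *m x)^T *m (P *m x).
  by rewrite trmx_mul sP -!mulmxA (mulmxA P) iP.
by rewrite -trace_mx11; exact: tr_gram_ge0.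
Qed.

(** If a PSD matrix A is annihilated by prod_(r <- s) (X - r) with distinct
    nonnegative roots, then p(A) is a PSD square root of A, where p is the
    Lagrange interpolant of sqrt on s. *)
Lemma psd_sqrt_interp n (A : 'M[R]_n.+1) (s : seq R) : psd_mx A -> uniq s ->
  all (fun r => 0 <= r) s -> horner_mx A (prod_XsubC s) = 0 ->
  exists B, is_psd_sqrt A B.
Proof.
move=> hA us /allP s0 hs.
pose L k := \prod_(l <- s | l != k) (('X - l%:P) * ((k - l)^-1)%:P).
have Lk k m : k \in s -> m \in s -> (L k).[m] = (m == k)%:R.
  move=> ks ms; rewrite horner_prod.
  case: eqP => [->|/eqP mk].
    rewrite big_seq_cond big1 // => l /andP [_ lk].
    by rewrite hornerM hornerXsubC hornerC divff // subr_eq0 eq_sym.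
  by rewrite (big_rem m) //= mk hornerM hornerXsubC subrr !mul0r.
pose p := \sum_(k <- s) Num.sqrt k *: L k.
have hp m : m \in s -> p.[m] = Num.sqrt m.
  move=> ms; rewrite horner_sum (bigD1_seq m) //= hornerZ Lk // eqxx mulr1.
  rewrite big_seq_cond big1 ?addr0 // => k /andP [ks km].
  by rewrite hornerZ Lk // eq_sym (negbTE km) mulr0.
have vanish q : all (root q) s -> horner_mx A q = 0.
  move=> hq; have us' : uniq_roots s by rewrite uniq_rootsE.
  have [t ->] := uniq_roots_prod_XsubC hq us'.
  by rewrite rmorphM /= -/(prod_XsubC s) hs mulr0.
have sA : A^T = A by case: hA.
exists (horner_mx A p); split; last first.
  have : horner_mx A (p * p - 'X) = 0.
    apply: vanish; apply/allP => m ms.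
    by rewrite /root hornerD hornerN hornerM hornerX hp // -expr2 sqr_sqrtr ?s0 // subrr.
  by rewrite rmorphB rmorphM /= horner_mx_X => /eqP; rewrite subr_eq0 => /eqP.
split; first exact: horner_mx_sym.
move=> x; rewrite raddf_sum mulmx_sumr mulmx_suml summxE.
rewrite big_seq; apply: sumr_ge0 => k ks; rewrite /= horner_mxZ -scalemxAr -scalemxAl mxE.
apply: mulr_ge0; first exact: sqrtr_ge0.
apply: sym_idem_psd; first exact: horner_mx_sym.
have : horner_mx A (L k * L k - L k) = 0.
  apply: vanish; apply/allP => m ms.
  by rewrite /root hornerD hornerN hornerM Lk //; case: (m == k); rewrite ?mulr1 ?mul0r subrr.
by rewrite rmorphB rmorphM /= => /eqP; rewrite subr_eq0 => /eqP.
Qed.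

(** Every PSD matrix has a PSD square root, by Cayley-Hamilton and the
    splitting of its characteristic polynomial. *)
Lemma psd_sqrt_exists n (A : 'M[R]_n) : psd_mx A -> exists B, is_psd_sqrt A B.
Proof.
case: n A => [|n] A hA.
  exists 0; split; last by apply/matrixP => [[m hm]].
  split; first by rewrite /symmetric_mx trmx0.
  by move=> x; rewrite mulmx0 mul0mx mxE.
have [s hs] := sym_char_poly_split (proj1 hA).
have h0 : horner_mx A (prod_XsubC s * 1) = 0.
  by rewrite mulr1 /prod_XsubC -hs Cayley_Hamilton.
have := nonneg_roots_annihilate hA h0; rewrite mulr1.
exact: psd_sqrt_interp hA (nonneg_roots_uniq s) (nonneg_roots_ge0 s).
Qed.

Lemma sqrtm_spec n (M : 'M[R]_n) : psd_mx M -> is_psd_sqrt M (sqrtm M).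
Proof. by move=> hM; apply: epsilon_spec; exact: psd_sqrt_exists. Qed.

Lemma sqrtm_psd n (M : 'M[R]_n) : psd_mx M -> psd_mx (sqrtm M).
Proof. by move=> /sqrtm_spec []. Qed.

Lemma sqrtm_sym n (M : 'M[R]_n) : psd_mx M -> (sqrtm M)^T = sqrtm M.
Proof. by move=> /sqrtm_psd []. Qed.

Lemma sqrtm_sq n (M : 'M[R]_n) : psd_mx M -> sqrtm M *m sqrtm M = M.
Proof. by move=> /sqrtm_spec []. Qed.

Lemma psd_tr_congr_eq0 n m (B : 'M[R]_n) (D : 'M[R]_(n, m)) :
  psd_mx B -> \tr (D^T *m B *m D) = 0 -> B *m D = 0.
Proof.
move=> hB h; have sL := sqrtm_sym hB; have LL := sqrtm_sq hB.
set L := sqrtm B in sL LL.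
have e : D^T *m B *m D = (L *m D)^T *m (L *m D) by rewrite trmx_mul sL -LL !mulmxA.
by rewrite e in h; rewrite -LL -mulmxA (tr_gram_eq0 h) mulmx0.
Qed.

Lemma psd_sqrt_unique n (B1 B2 : 'M[R]_n) : psd_mx B1 -> psd_mx B2 ->
  B1 *m B1 = B2 *m B2 -> B1 = B2.
Proof.
move=> h1 h2 e.
have s1 : B1^T = B1 by case: h1.
have s2 : B2^T = B2 by case: h2.
set D := B1 - B2.
have sD : D^T = D by rewrite /D raddfB /= s1 s2.
(* tr(D B1 D) = - tr(D B2 D), and both are nonnegative *)
have t12 : \tr (D^T *m B1 *m D) = - \tr (D^T *m B2 *m D).
  have eD : B1 *m D = - (D *m B2) by rewrite /D mulmxBr mulmxBl e opprB.
  rewrite sD -mulmxA eD mulmxN raddfN /=; congr (- _); exact: mxtrace_mulC.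
have g1 := psd_tr_congr D h1; have g2 := psd_tr_congr D h2.
have d1 : B1 *m D = 0 by apply: psd_tr_congr_eq0 => //; lra.
have d2 : B2 *m D = 0 by apply: psd_tr_congr_eq0 => //; lra.
have dd : D^T *m D = 0.
  rewrite sD {1}/D mulmxBr.
  have -> : D *m B1 = (B1 *m D)^T by rewrite trmx_mul sD s1.
  have -> : D *m B2 = (B2 *m D)^T by rewrite trmx_mul sD s2.
  by rewrite d1 d2 trmx0 subrr.
by apply/eqP; rewrite -subr_eq0; apply/eqP/tr_gram_eq0; rewrite dd mxtrace0.
Qed.

Lemma sqrtm_eq n (M B : 'M[R]_n) : psd_mx B -> B *m B = M -> sqrtm M = B.
Proof.
move=> hB e; have hM : psd_mx M by rewrite -e; apply: psd_sqr; case: hB.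
by apply: psd_sqrt_unique; [exact: sqrtm_psd | exact: hB | rewrite sqrtm_sq].
Qed.

Lemma sqrtm_unit n (M : 'M[R]_n) : spd_mx M -> sqrtm M \in unitmx.
Proof.
move=> hM; have := spd_unit hM.
by rewrite -{1}(sqrtm_sq (spd_psd hM)) unitmx_mul => /andP [].
Qed.

End SquareRoot.

Section BuresFidelity.
Variable R : rcfType.

Lemma trace_defect_identity n (L V1 V2 : 'M[R]_n) :
  L^T = L -> V1 *m V1^T + V2 *m V2^T = 1%:M ->
  \tr ((L - V1^T *m L)^T *m (L - V1^T *m L)) + \tr ((V2^T *m L)^T *m (V2^T *m L))
  = (\tr (L *m L) - \tr (L *m V1 *m L)) *+ 2.
Proof.
move=> sL hV.
have a1 : \tr (L *m (V1^T *m L)) = \tr (L *m V1 *m L).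
  by rewrite -mxtrace_tr !trmx_mul trmxK sL.
have a2 : \tr (L *m V1 *m (V1^T *m L)) + \tr (L *m V2 *m (V2^T *m L)) = \tr (L *m L).
  rewrite -raddfD /= !mulmxA -(mulmxA L V1) -(mulmxA L V2).
  by rewrite -mulmxDl -mulmxDr hV mulmx1.
have eT : (L - V1^T *m L)^T = L - L *m V1 by rewrite raddfB /= trmx_mul trmxK sL.
rewrite eT !trmx_mul !trmxK sL mulmxBl !mulmxBr !raddfB /= a1 mulr2n.
by move: a2; lra.
Qed.

Lemma trace_le_sum_sqr n (T X G : 'M[R]_n) : psd_mx T -> T \in unitmx ->
  X^T = X -> G^T = G -> X *m X + G *m G = T *m T ->
  \tr X <= \tr T /\ (\tr X = \tr T -> G = 0).
Proof.
move=> hT uT sX sG e.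
have sT : T^T = T by case: hT.
have sTi : (invmx T)^T = invmx T by rewrite trmx_inv sT.
(* the rows of [T^-1 X | T^-1 G] are orthonormal *)
have hV : (invmx T *m X) *m (invmx T *m X)^T + (invmx T *m G) *m (invmx T *m G)^T
          = 1%:M.
  rewrite !trmx_mul sX sG sTi !mulmxA -(mulmxA _ X X) -(mulmxA _ G G).
  by rewrite -mulmxDl -mulmxDr e mulmxA mulVmx // mul1mx mulmxV.
have sL := sqrtm_sym hT; have LL := sqrtm_sq hT.
set L := sqrtm T in sL LL.
have uL : L \in unitmx by move: uT; rewrite -LL unitmx_mul => /andP [].
have key := trace_defect_identity sL hV.
have t2 : \tr (L *m (invmx T *m X) *m L) = \tr X.
  by rewrite mxtrace_mulC !mulmxA LL mulmxV // mul1mx.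
rewrite t2 LL in key; move: key.
set E1 := L - _; set E2 := (invmx T *m G)^T *m L => key.
have g1 := tr_gram_ge0 E1; have g2 := tr_gram_ge0 E2.
split; first by move: key; rewrite mulr2n; lra.
move=> eq; have : \tr (E2^T *m E2) = 0 by move: key; rewrite eq mulr2n; lra.
move/tr_gram_eq0 => /(congr1 (mulmx^~ (invmx L))).
rewrite /E2 -mulmxA mulmxV // mulmx1 mul0mx.
move/(congr1 trmx); rewrite trmxK trmx0 => /(congr1 (mulmx T)).
by rewrite mulmxA mulmxV // mul1mx mulmx0.
Qed.

Notation fidelity C S := (\tr (sqrtm (sqrtm C *m S *m sqrtm C))).

(** 2 F(C, S) <= tr C + tr S, i.e. the squared Bures distance is the
    nonnegative quantity under the square root in [dW]. *)
Lemma fidelity_le n (C S : 'M[R]_n) : spd_mx C -> spd_mx S ->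
  2 * fidelity C S <= \tr C + \tr S.
Proof.
move=> hC hS.
have pC := spd_psd hC; have pS := spd_psd hS.
have sK := sqrtm_sym pC; have KK := sqrtm_sq pC; have uK := sqrtm_unit hC.
set K := sqrtm C in sK KK uK *.
have sZ := sqrtm_sym pS; have ZZ := sqrtm_sq pS.
set Z := sqrtm S in sZ ZZ *.
have hM : spd_mx (K *m S *m K) := spd_congr_sym sK uK hS.
have pM := spd_psd hM.
have sB := sqrtm_sym pM; have BB := sqrtm_sq pM; have uB := sqrtm_unit hM.
set B := sqrtm (K *m S *m K) in sB BB uB *.
(* polar decomposition K Z = B W with W orthogonal *)
set F := K *m Z.
have FF : F *m F^T = B *m B.
  by rewrite BB /F trmx_mul sZ sK !mulmxA -(mulmxA K Z Z) ZZ.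
set W := invmx B *m F.
have sBi : (invmx B)^T = invmx B by rewrite trmx_inv sB.
have WW : W *m W^T = 1%:M.
  rewrite /W trmx_mul sBi mulmxA -(mulmxA _ F) FF mulmxA mulVmx // mul1mx mulmxV //.
have WTW : W^T *m W = 1%:M := mulmx1C WW.
have h : B *m W = F by rewrite /W mulmxA mulmxV // mul1mx.
clearbody W.
have eB : B = K *m (Z *m W^T) by rewrite mulmxA -/F -h -mulmxA WW mulmx1.
set Y := Z *m W^T in eB *.
have YY : Y *m Y^T = S.
  by rewrite /Y trmx_mul trmxK -mulmxA (mulmxA W^T W) WTW mul1mx sZ ZZ.
(* 0 <= |K - Y^T|^2 = tr C + tr S - 2 tr (K Y) *)
have g := tr_gram_ge0 (K - Y^T).
have eT : (K - Y^T)^T = K - Y by rewrite raddfB /= trmxK sK.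
rewrite eT mulmxBl !mulmxBr !raddfB /= KK YY in g.
have a1 : \tr (K *m Y^T) = \tr (K *m Y).
  by rewrite -mxtrace_tr trmx_mul trmxK sK mxtrace_mulC.
have a2 : \tr (Y *m K) = \tr (K *m Y) by rewrite mxtrace_mulC.
by rewrite eB; lra.
Qed.

Lemma dW_sqr n (C S : 'M[R]_n) : spd_mx C -> spd_mx S ->
  dW C S ^+ 2 = \tr C + \tr S - 2 * fidelity C S.
Proof. by move=> hC hS; rewrite /dW sqr_sqrtr //; have := fidelity_le hC hS; lra. Qed.

Lemma parallelogram_mx n (X Y : 'M[R]_n) :
  (X + Y) *m (X + Y) + (X - Y) *m (X - Y) = (X *m X + Y *m Y) *+ 2.
Proof.
rewrite mulmxBl !mulmxBr mulmxDl !mulmxDr opprB.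
set a := X *m X; set b := X *m Y; set c := Y *m X; set d := Y *m Y.
rewrite addrACA [a + b + _]addrACA subrr addr0 (addrC c d) [d + c + _]addrACA.
by rewrite subrr addr0 mulr2n addrACA.
Qed.

Lemma fidelity_midpoint n (C S1 S2 : 'M[R]_n) :
  spd_mx C -> spd_mx S1 -> spd_mx S2 ->
  fidelity C S1 + fidelity C S2 <= 2 * fidelity C ((2:R)^-1 *: (S1 + S2))
  /\ (fidelity C S1 + fidelity C S2 = 2 * fidelity C ((2:R)^-1 *: (S1 + S2)) ->
      S1 = S2).
Proof.
move=> hC h1 h2.
have hS := spd_midpoint h1 h2.
have pC := spd_psd hC.
have sK := sqrtm_sym pC; have uK := sqrtm_unit hC.
set K := sqrtm C in sK uK *.
set S := (2:R)^-1 *: (S1 + S2) in hS *.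
have pM1 := spd_psd (spd_congr_sym sK uK h1).
have pM2 := spd_psd (spd_congr_sym sK uK h2).
have hM := spd_congr_sym sK uK hS; have pM := spd_psd hM.
have sB1 := sqrtm_sym pM1; have BB1 := sqrtm_sq pM1.
have sB2 := sqrtm_sym pM2; have BB2 := sqrtm_sq pM2.
have sB := sqrtm_sym pM; have BB := sqrtm_sq pM; have uB := sqrtm_unit hM.
have pB := sqrtm_psd pM.
set B1 := sqrtm (K *m S1 *m K) in sB1 BB1 *.
set B2 := sqrtm (K *m S2 *m K) in sB2 BB2 *.
set B := sqrtm (K *m S *m K) in sB BB uB pB *.
(* (B1 + B2)^2 + (B1 - B2)^2 = (2 B)^2 *)
have pT : psd_mx ((2:R) *: B) by apply: psd_scale.
have uT : (2:R) *: B \in unitmx by rewrite unitmxZ ?uB // unitfE pnatr_eq0.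
have sX : (B1 + B2)^T = B1 + B2 by rewrite raddfD /= sB1 sB2.
have sG : (B1 - B2)^T = B1 - B2 by rewrite raddfB /= sB1 sB2.
have e : (B1 + B2) *m (B1 + B2) + (B1 - B2) *m (B1 - B2) = ((2:R) *: B) *m ((2:R) *: B).
  rewrite parallelogram_mx -scalemxAr -scalemxAl scalerA BB /S.
  rewrite -scalemxAr -scalemxAl scalerA mulmxDr mulmxDl BB1 BB2.
  have -> : (2 * 2 / 2 : R) = 2 by field.
  by rewrite scaler_nat.
have [le eq0] := trace_le_sum_sqr pT uT sX sG e.
rewrite mxtraceZ raddfD /= in le eq0.
split => // eq.
have /eqP := eq0 eq; rewrite subr_eq0 => /eqP eB.
have eM : K *m S1 *m K = K *m S2 *m K by rewrite -BB1 -BB2 eB.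
have := congr1 (mulmx (invmx K)) eM; rewrite !mulmxA !mulVmx // !mul1mx.
by move/(congr1 (mulmx^~ (invmx K))); rewrite -!mulmxA !mulmxV // !mulmx1.
Qed.

Lemma fidelity_reflect n (C S O : 'M[R]_n) : spd_mx C -> psd_mx S ->
  O^T = O -> O *m O = 1%:M -> O *m C *m O = C ->
  fidelity C (O *m S *m O) = fidelity C S.
Proof.
move=> hC hS sO OO eC.
have pC := spd_psd hC.
have pK := sqrtm_psd pC; have KK := sqrtm_sq pC.
set K := sqrtm C in pK KK *.
(* O K O is a PSD square root of C, hence equal to K *)
have eK : K = O *m K *m O.
  apply: (sqrtm_eq (psd_congr_sym sO pK)).
  by rewrite !mulmxA -(mulmxA _ O O) OO mulmx1 -(mulmxA _ K K) KK.
have KO : K *m O = O *m K by rewrite {1}eK -!mulmxA OO mulmx1.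
have sK : K^T = K by case: pK.
have -> : K *m (O *m S *m O) *m K = O *m (K *m S *m K) *m O.
  by rewrite !mulmxA KO -(mulmxA _ O K) -KO !mulmxA.
have pM := psd_congr_sym sK hS.
have pB := sqrtm_psd pM; have BB := sqrtm_sq pM.
rewrite (sqrtm_eq (psd_congr_sym sO pB)); first by rewrite mxtrace_mulC mulmxA OO mul1mx.
by rewrite -[in RHS]BB !mulmxA -(mulmxA _ O O) OO mulmx1.
Qed.

(** Uniqueness of the barycenter forces its symmetries: a symmetric
    orthogonal O fixing every C_i also fixes the Wasserstein mean Cb. *)
Lemma mean_reflect_fixed n N (C : 'I_N -> 'M[R]_n) (Cb O : 'M[R]_n) : (0 < N)%N ->
  (forall i, spd_mx (C i)) -> spd_mx Cb ->
  (forall S, spd_mx S -> \sum_(i < N) dW (C i) Cb ^+ 2 <= \sum_(i < N) dW (C i) S ^+ 2) ->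
  O^T = O -> O *m O = 1%:M -> (forall i, O *m C i *m O = C i) -> O *m Cb *m O = Cb.
Proof.
move=> N0 hC hCb hmin sO OO hOC.
apply/eqP; apply/negPn/negP => neq.
set S2 := O *m Cb *m O in neq.
have uO : O \in unitmx by case: (mulmx1_unit OO).
have h2 : spd_mx S2 := spd_congr_sym sO uO hCb.
have hS := spd_midpoint hCb h2.
set S' := (2:R)^-1 *: (Cb + S2) in hS.
(* the reflected mean S2 is equally good ... *)
have trS2 : \tr S2 = \tr Cb by rewrite /S2 mxtrace_mulC mulmxA OO mul1mx.
have e2 i : dW (C i) S2 ^+ 2 = dW (C i) Cb ^+ 2.
  by rewrite !dW_sqr // trS2 fidelity_reflect //; exact: spd_psd.
(* ... and the midpoint S' is strictly better than both *)
have e3 i : 2 * dW (C i) S' ^+ 2 < dW (C i) Cb ^+ 2 + dW (C i) S2 ^+ 2.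
  rewrite !dW_sqr //.
  have [m1 m2] := fidelity_midpoint (hC i) hCb h2.
  have trS : \tr S' = (2:R)^-1 * (\tr Cb + \tr S2) by rewrite /S' mxtraceZ raddfD.
  rewrite trS -/S'.
  have lt : fidelity (C i) Cb + fidelity (C i) S2 < 2 * fidelity (C i) S'.
    by rewrite lt_neqAle m1 andbT; apply/eqP => /m2 eq; move: neq; rewrite eq eqxx.
  lra.
have := hmin S' hS.
have lt : \sum_(i < N) 2 * dW (C i) S' ^+ 2
          < \sum_(i < N) (dW (C i) Cb ^+ 2 + dW (C i) S2 ^+ 2).
  by apply: ltr_sum => //; apply/hasP; exists (Ordinal N0) => //; exact: mem_index_enum.
rewrite -mulr_sumr big_split /= (eq_bigr _ (fun i _ => e2 i)) in lt.
lra.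
Qed.

End BuresFidelity.

Section CoordinateReflections.
Variable R : rcfType.

Definition refl n (k : 'I_n) : 'M[R]_n := diag_mx (\row_l (if l == k then -1 else 1)).

Lemma refl_sym n (k : 'I_n) : (refl k)^T = refl k.
Proof. exact: tr_diag_mx. Qed.

Lemma refl_sqr n (k : 'I_n) : refl k *m refl k = 1%:M.
Proof.
apply/matrixP => i j; rewrite mul_diag_mx !mxE.
case: (i =P j) => [->|ij]; last by rewrite mulr0n mulr0.
by rewrite !mulr1n; case: (j == k); rewrite ?mulrNN mulr1.
Qed.

Lemma refl_conjE n (k : 'I_n) (M : 'M[R]_n) l m :
  (refl k *m M *m refl k) l m
  = (if l == k then -1 else 1) * M l m * (if m == k then -1 else 1).
Proof. by rewrite mul_mx_diag mxE mul_diag_mx !mxE. Qed.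

Lemma refl_fixed_eigvec n (D : 'M[R]_n) (k : 'I_n) :
  refl k *m D *m refl k = D -> D *m delta_mx k (0 : 'I_1) = D k k *: delta_mx k (0 : 'I_1).
Proof.
move=> hD; rewrite -colE; apply/matrixP => l z; rewrite (ord1 z) !mxE.
case: (l =P k) => [->|/eqP lk]; first by rewrite mulr1.
have := congr1 (fun X : 'M[R]_n => X l k) hD; rewrite /= refl_conjE eqxx (negbTE lk).
by rewrite mul1r mulrN1 mulr0 => e; lra.
Qed.

Lemma refl_block_fix Q K (pp : 'rV[R]_Q) (Nm : 'M[R]_K) (j : 'I_Q) :
  refl (lshift K j) *m block_mx (diag_mx pp) 0 0 Nm *m refl (lshift K j)
  = block_mx (diag_mx pp) 0 0 Nm.
Proof.
apply/matrixP => l m; rewrite refl_conjE.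
case: (split_ordP l) => l' ->; case: (split_ordP m) => m' ->.
- rewrite !block_mxEul !mxE !eq_lshift.
  case: (l' =P m') => [->|lm]; last by rewrite mulr0n mulr0 mul0r.
  by case: (m' == j); rewrite ?mulrN ?mulNr ?opprK ?mulr1 ?mul1r.
- by rewrite !block_mxEur !mxE mulr0 mul0r.
- by rewrite !block_mxEdl !mxE mulr0 mul0r.
- by rewrite !block_mxEdr !eq_rlshift mulr1 mul1r.
Qed.

Lemma block_diag_eigvec Q K (pp : 'rV[R]_Q) (Nm : 'M[R]_K) (j : 'I_Q) :
  block_mx (diag_mx pp) 0 0 Nm *m delta_mx (lshift K j) (0 : 'I_1)
  = pp 0 j *: delta_mx (lshift K j) (0 : 'I_1).
Proof.
by rewrite refl_fixed_eigvec ?refl_block_fix // block_mxEul mxE eqxx mulr1n.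
Qed.

Lemma orth_conj_eigvec n (A M : 'M[R]_n) (x : 'cV[R]_n) d : A^T *m A = 1%:M ->
  A^T *m M *m A *m x = d *: x -> M *m (A *m x) = d *: (A *m x).
Proof.
move=> hA hx; have AAT : A *m A^T = 1%:M := mulmx1C hA.
by rewrite -[M]mul1mx -AAT -!mulmxA (mulmxA A^T) (mulmxA _ A) hx scalemxAr.
Qed.

Lemma mean_eigvec n N (C : 'I_N -> 'M[R]_n) (Cb A : 'M[R]_n) (k : 'I_n) :
  (0 < N)%N -> (forall i, spd_mx (C i)) -> spd_mx Cb ->
  (forall S, spd_mx S -> \sum_(i < N) dW (C i) Cb ^+ 2 <= \sum_(i < N) dW (C i) S ^+ 2) ->
  A^T *m A = 1%:M -> (forall i, refl k *m (A^T *m C i *m A) *m refl k = A^T *m C i *m A) ->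
  Cb *m (A *m delta_mx k (0 : 'I_1)) = (A^T *m Cb *m A) k k *: (A *m delta_mx k (0 : 'I_1)).
Proof.
move=> N0 hC hCb hmin hA hfix; have AAT : A *m A^T = 1%:M := mulmx1C hA.
set O := A *m refl k *m A^T.
have conjO M : O *m M *m O = A *m (refl k *m (A^T *m M *m A) *m refl k) *m A^T.
  by rewrite /O !mulmxA.
have unconj M : A^T *m (A *m M *m A^T) *m A = M.
  by rewrite !mulmxA hA mul1mx -mulmxA hA mulmx1.
have sO : O^T = O by rewrite /O !trmx_mul trmxK refl_sym mulmxA.
have OO : O *m O = 1%:M.
  by rewrite /O !mulmxA -(mulmxA _ A^T A) hA mulmx1 -(mulmxA _ _ (refl k)) refl_sqr mulmx1.
have hOC i : O *m C i *m O = C i.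
  by rewrite conjO hfix !mulmxA AAT mul1mx -mulmxA AAT mulmx1.
have := mean_reflect_fixed N0 hC hCb hmin sO OO hOC.
rewrite conjO => /(congr1 (fun M => A^T *m M *m A)); rewrite unconj => hD.
by apply: orth_conj_eigvec => //; exact: refl_fixed_eigvec.
Qed.

End CoordinateReflections.

Section TangentCoordinates.
Variable R : rcfType.

Lemma psd_sqr_eigvec n (M : 'M[R]_n) (x : 'cV[R]_n) s : psd_mx M -> 0 < s ->
  M *m (M *m x) = (s * s) *: x -> M *m x = s *: x.
Proof.
move=> pM s0 hx; set z := M *m x - s *: x.
have Mz : M *m z = - s *: z.
  by rewrite /z mulmxBr hx -scalemxAr -scalerA scalerBr !scaleNr opprK addrC.
have zMz : (z^T *m M *m z) 0 0 = - s * (z^T *m z) 0 0.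
  by rewrite -mulmxA Mz -scalemxAr mxE.
have g1 : 0 <= (z^T *m M *m z) 0 0 by case: pM => _; apply.
have g2 : 0 <= (z^T *m z) 0 0 by rewrite -trace_mx11; exact: tr_gram_ge0.
have z0 : z = 0 by apply: tr_gram_eq0; rewrite trace_mx11; nra.
by apply/eqP; rewrite -subr_eq0 -/z z0.
Qed.

(** The SVD alignment makes Ybar^T (Y_i Q_i) = U Sigma U^T PSD: Q_i solves
    the orthogonal Procrustes problem. *)
Lemma procrustes_psd n (Yb Yi U V Sg : 'M[R]_n) :
  U^T *m U = 1%:M -> V^T *m V = 1%:M -> is_diag_mx Sg -> (forall k, 0 <= Sg k k) ->
  Yb^T *m Yi = U *m Sg *m V^T -> psd_mx (Yb^T *m (Yi *m (V *m U^T))).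
Proof.
move=> hU hV dS pS hsvd.
have -> : Yb^T *m (Yi *m (V *m U^T)) = U *m Sg *m U^T.
  by rewrite mulmxA hsvd -!mulmxA (mulmxA V^T V) hV mul1mx.
exact/psd_congr/diag_psd.
Qed.

Lemma tangent_coordinate n (Cb Ci Yb Yi U V Sg : 'M[R]_n) (a : 'cV[R]_n) (d p : R) :
  Yb *m Yb^T = Cb -> Cb^T = Cb -> Cb *m a = d *: a -> a^T *m a = 1%:M ->
  0 < d -> 0 < p -> Ci *m a = p *: a -> Yi *m Yi^T = Ci ->
  U^T *m U = 1%:M -> V^T *m V = 1%:M -> is_diag_mx Sg -> (forall k, 0 <= Sg k k) ->
  Yb^T *m Yi = U *m Sg *m V^T ->
  (a^T *m (Yi *m (V *m U^T)) *m (Yb^T *m a)) 0 0 = Num.sqrt d * Num.sqrt p.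
Proof.
move=> hYb sCb hCa aa d0 p0 hCi hYi hU hV dS pS hsvd.
set W := Yi *m (V *m U^T); set M := Yb^T *m W; set x := Yb^T *m a.
have pM : psd_mx M := procrustes_psd hU hV dS pS hsvd.
have sM : M^T = M by case: pM.
(* M^2 = Yb^T C_i Yb, hence x = Yb^T a is an eigenvector of M^2 *)
have WW : W *m W^T = Ci.
  rewrite /W !trmx_mul trmxK !mulmxA -(mulmxA _ U^T U) hU mulmx1.
  by rewrite -(mulmxA _ V V^T) (mulmx1C hV) mulmx1.
have MM : M *m M = Yb^T *m Ci *m Yb.
  by rewrite -{2}sM /M trmx_mul mulmxA -(mulmxA _ W W^T) WW trmxK.
have dp0 : 0 < d * p by exact: mulr_gt0.
set s := Num.sqrt (d * p).
have ss : s * s = d * p by rewrite -expr2 sqr_sqrtr // ltW.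
have Mx : M *m x = s *: x.
  apply: psd_sqr_eigvec; rewrite ?sqrtr_gt0 // ss mulmxA MM /x -!mulmxA.
  by rewrite (mulmxA Yb) hYb hCa -scalemxAr hCi scalerA -scalemxAr.
(* evaluate x^T M x in two ways *)
have xx : x^T *m x = d%:M.
  rewrite /x trmx_mul trmxK mulmxA -(mulmxA a^T) hYb -mulmxA hCa -scalemxAr aa.
  by rewrite scalemx1.
have xMx : x^T *m M *m x = d *: (a^T *m W *m x).
  rewrite /M {1}/x trmx_mul trmxK !mulmxA -(mulmxA a^T Yb) hYb.
  have -> : a^T *m Cb = d *: a^T by rewrite -sCb -trmx_mul hCa linearZ.
  by rewrite -!scalemxAl.
have : (x^T *m M *m x) 0 0 = s * d.
  by rewrite -mulmxA Mx -scalemxAr xx !mxE eqxx mulr1n.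
rewrite xMx mxE => h.
have : (a^T *m W *m x) 0 0 = s by apply: (mulfI (lt0r_neq0 d0)); rewrite h mulrC.
by rewrite /x -/W mulmxA => ->; rewrite /s sqrtrM // ltW.
Qed.

Lemma mxvec_bilinear_form n (W B : 'M[R]_n) (a : 'cV[R]_n) :
  (mxvec W *m (mxvec (a *m (a^T *m B)))^T) 0 0 = (a^T *m W *m (B^T *m a)) 0 0.
Proof.
transitivity ((mxvec (a *m (a^T *m B)) *m (mxvec W)^T)^T 0 0).
  by rewrite trmx_mul trmxK.
rewrite [LHS]mxE.
by have := mxvec_dotmul W a^T (a^T *m B); rewrite !trmx_mul !trmxK => ->.
Qed.

End TangentCoordinates.

Section Conclusion.
Variable R : rcfType.

Lemma spd_block_diag Q K (pp : 'rV[R]_Q) (Nm : 'M[R]_K) :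
  (forall j, 0 < pp 0 j) -> spd_mx Nm -> spd_mx (block_mx (diag_mx pp) 0 0 Nm).
Proof.
move=> hp [sN hN]; split; first by rewrite /symmetric_mx tr_block_mx tr_diag_mx !trmx0 sN.
move=> x x0; rewrite -(vsubmxK x) tr_col_mx mul_row_block !mulmx0 addr0 add0r.
rewrite mul_row_col mxE.
set x1 := usubmx x; set x2 := dsubmx x.
have diag_quad : (x1^T *m diag_mx pp *m x1) 0 0 = \sum_k pp 0 k * x1 k 0 ^+ 2.
  by rewrite mul_mx_diag mxE; apply: eq_bigr => k _; rewrite !mxE; ring.
have g1 : 0 <= (x1^T *m diag_mx pp *m x1) 0 0.
  by rewrite diag_quad; apply: sumr_ge0 => k _; apply: mulr_ge0; [exact: ltW | exact: sqr_ge0].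
have g2 : 0 <= (x2^T *m Nm *m x2) 0 0 by case: (spd_psd (conj sN hN)) => _; apply.
have [e2|n2] := eqVneq x2 0; last by have := hN x2 n2; lra.
have n1 : x1 != 0.
  by apply: contra x0 => /eqP e1; apply/eqP; rewrite -(vsubmxK x) -/x1 -/x2 e1 e2 col_mx0.
suff : (x1^T *m diag_mx pp *m x1) 0 0 != 0.
  by rewrite e2 mulmx0 [X in _ + X]mxE addr0 lt_neqAle eq_sym g1 andbT.
rewrite diag_quad psumr_eq0 => [|k _]; last by apply: mulr_ge0; [exact: ltW | exact: sqr_ge0].
apply: contra n1 => /allP H; apply/eqP/matrixP => k z; rewrite (ord1 z) [RHS]mxE.
move: (H k (mem_index_enum k)) => /implyP /(_ isT).
by rewrite mulf_eq0 (gt_eqF (hp k)) /= sqrf_eq0 => /eqP.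
Qed.

Lemma orth_col_unit n (A : 'M[R]_n) (k : 'I_n) : A^T *m A = 1%:M ->
  (A *m delta_mx k (0 : 'I_1))^T *m (A *m delta_mx k (0 : 'I_1)) = 1%:M.
Proof.
move=> hA; rewrite trmx_mul -mulmxA (mulmxA A^T) hA mul1mx trmx_delta mul_delta_mx.
by apply/matrixP => x y; rewrite (ord1 x) (ord1 y) !mxE.
Qed.

Lemma spd_eigval_gt0 n (S : 'M[R]_n) (a : 'cV[R]_n) d :
  spd_mx S -> a^T *m a = 1%:M -> S *m a = d *: a -> 0 < d.
Proof.
move=> [_ hS] aa hSa.
have <- : (a^T *m S *m a) 0 0 = d by rewrite -mulmxA hSa -scalemxAr aa !mxE eqxx mulr1.
apply: hS; apply/eqP => a0; move: aa; rewrite a0 mulmx0 => /matrixP /(_ 0 0).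
by rewrite !mxE eqxx => /esym/eqP; rewrite oner_eq0.
Qed.

Lemma affine_fit m N Q (v : 'I_N -> 'rV[R]_m) (g : 'I_Q -> 'cV[R]_m)
    (s b : 'I_Q -> R) (x : 'I_N -> 'I_Q -> R) (alpha : 'I_Q -> R) :
  (forall j, s j != 0) -> (forall i j, (v i *m g j) 0 0 = s j * x i j - b j) ->
  exists (beta : 'cV[R]_m) (c : R),
    forall i, \sum_(j < Q) alpha j * x i j = (v i *m beta) 0 0 + c.
Proof.
move=> s0 hv; exists (\sum_(j < Q) (alpha j / s j) *: g j).
exists (\sum_(j < Q) alpha j / s j * b j) => i.
rewrite mulmx_sumr summxE -big_split /=; apply: eq_bigr => j _.
by rewrite -scalemxAr mxE hv mulrBr subrK mulrA divfK.
Qed.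

End Conclusion.

Unset Implicit Arguments.

Theorem proposition3 (R : rcfType) (Q K N : nat)
  (hQ : (1 <= Q)%N) (hK : (1 <= K)%N) (hN : (1 <= N)%N)
  (A : 'M[R]_(Q + K)) (hA : orthogonal_mx A)
  (p : 'I_N -> 'I_Q -> R) (hp : forall i j, 0 < p i j)
  (Nm : 'I_N -> 'M[R]_K) (hNm : forall i, spd_mx (Nm i))
  (alpha : 'I_Q -> R)
  (Cbar : 'M[R]_(Q + K))
  (hCbar : spd_mx Cbar /\
     forall S : 'M[R]_(Q + K), spd_mx S ->
       \sum_(i < N) dW (A *m block_mx (diag_mx (\row_j p i j)) 0 0 (Nm i) *m A^T) Cbar ^+ 2
       <= \sum_(i < N) dW (A *m block_mx (diag_mx (\row_j p i j)) 0 0 (Nm i) *m A^T) S ^+ 2)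
  (Ybar : 'M[R]_(Q + K)) (hYbar : Ybar *m Ybar^T = Cbar)
  (Y : 'I_N -> 'M[R]_(Q + K))
  (hY : forall i, Y i *m (Y i)^T = A *m block_mx (diag_mx (\row_j p i j)) 0 0 (Nm i) *m A^T)
  (U V Sig : 'I_N -> 'M[R]_(Q + K))
  (hU : forall i, orthogonal_mx (U i)) (hV : forall i, orthogonal_mx (V i))
  (hSig : forall i, is_diag_mx (Sig i) /\ forall k, 0 <= Sig i k k)
  (hsvd : forall i, Ybar^T *m Y i = U i *m Sig i *m (V i)^T) :
  exists (beta : 'cV[R]_((Q + K) * (Q + K))) (c : R),
    forall i : 'I_N,
      \sum_(j < Q) alpha j * Num.sqrt (p i j)
      = (mxvec (Y i *m (V i *m (U i)^T) - Ybar) *m beta) 0 0 + c.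
Proof.
set E := fun i => block_mx (diag_mx (\row_j p i j)) 0 0 (Nm i).
set C := fun i => A *m E i *m A^T.
have [hCb hmin] := hCbar; have sCb : Cbar^T = Cbar by case: hCb.
have unconj M : A^T *m (A *m M *m A^T) *m A = M.
  by rewrite !mulmxA hA mul1mx -mulmxA hA mulmx1.
have hC i : spd_mx (C i).
  apply: spd_congr; first by case: (mulmx1_unit hA).
  by apply: spd_block_diag => // j; rewrite mxE.
pose a j := A *m delta_mx (lshift K j) (0 : 'I_1).
pose d j := (A^T *m Cbar *m A) (lshift K j) (lshift K j).
have hCa j : Cbar *m a j = d j *: a j.
  by apply: mean_eigvec hN hC hCb hmin hA _ => i; rewrite unconj refl_block_fix.
have hCia i j : C i *m a j = p i j *: a j.
  by apply: orth_conj_eigvec hA _; rewrite unconj block_diag_eigvec mxE.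
have aa j : (a j)^T *m a j = 1%:M := orth_col_unit _ hA.
have d0 j : 0 < d j := spd_eigval_gt0 hCb (aa j) (hCa j).
(* each tangent coordinate is sqrt (d j) sqrt (p i j) up to a constant *)
apply: (affine_fit (g := fun j => (mxvec (a j *m ((a j)^T *m Ybar)))^T)
  (s := fun j => Num.sqrt (d j))
  (b := fun j => ((a j)^T *m Ybar *m (Ybar^T *m a j)) 0 0)) => [j | i j].
  by rewrite lt0r_neq0 // sqrtr_gt0.
rewrite mxvec_bilinear_form mulmxBr mulmxBl [LHS]mxE [X in _ + X]mxE.
congr (_ - _); have [dS pS] := hSig i.
exact: tangent_coordinate hYbar sCb (hCa j) (aa j) (d0 j) (hp i j) (hCia i j) (hY i)
  (hU i) (hV i) dS pS (hsvd i).
Qed.
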